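(* Let $d\ge2$, $A\in\mathbb R^{m,m}$, $f\in C^1(\mathbb R^m,\mathbb R^m)$, $S\in\mathbb R^{d,d}$ skew-symmetric, and let $U\in\mathbb C^{d,d}$ be unitary with $U^HSU=\Lambda_S=\operatorname{diag}(\lambda_1^S,\dots,\lambda_d^S)$, where $\lambda_1^S,\dots,\lambda_d^S$ are the eigenvalues of $S$. Let $v_\star\in C^3(\mathbb R^d,\mathbb R^m)$ be a classical solution of $A\Delta v_\star(x)+\langle Sx,\nabla v_\star(x)\rangle+f(v_\star(x))=0$, $x\in\mathbb R^d$. Then $v(x)=Dv_\star(x)(Ex+b)$, $x\in\mathbb R^d$, is a classical solution of $\lambda v-\mathcal Lv=0$ on $\mathbb R^d$, where $\mathcal Lv(x)=A\Delta v(x)+\langle Sx,\nabla v(x)\rangle+Df(v_\star(x))v(x)$, whenever either (i) $\lambda=-\lambda_l^S$, $E=0$, $b=Ue_l$ for some $l\in\{1,\dots,d\}$, or (ii) $\lambda=-(\lambda_i^S+\lambda_j^S)$, $E=U(I_{ij}-I_{ji})U^\top$, $b=0$ for some $1\le i<j\le d$. All these values $\lambda$ lie on the imaginary axis.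
   Context: For $x\in\mathbb R^d$, $\langle Sx,\nabla v(x)\rangle=\sum_{i,j=1}^dS_{ij}x_j\partial_{x_i}v(x)$. $e_l$ denotes the $l$-th standard unit vector of $\mathbb C^d$, and $I_{ij}=e_ie_j^\top\in\mathbb R^{d,d}$ is the matrix with entry $1$ in row $i$, column $j$ and $0$ elsewhere. $Dv_\star(x)\in\mathbb R^{m,d}$ is the Jacobian of $v_\star$ at $x$. *)

From Stdlib Require Import Reals Lra Lia ClassicalEpsilon.
Open Scope R_scope.

Fixpoint rsum (n : nat) (f : nat -> R) : R :=
  match n with
  | O => 0
  | S n' => rsum n' f + f n'
  end.

Record Cx : Type := mkCx { Re : R; Im : R }.
Definition RtoCx (r : R) : Cx := mkCx r 0.
Definition Cx0 : Cx := RtoCx 0.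
Definition Cx1 : Cx := RtoCx 1.
Definition Cxadd (z w : Cx) : Cx := mkCx (Re z + Re w) (Im z + Im w).
Definition Cxopp (z : Cx) : Cx := mkCx (- Re z) (- Im z).
Definition Cxsub (z w : Cx) : Cx := Cxadd z (Cxopp w).
Definition Cxmul (z w : Cx) : Cx :=
  mkCx (Re z * Re w - Im z * Im w) (Re z * Im w + Im z * Re w).
Definition Cxconj (z : Cx) : Cx := mkCx (Re z) (- Im z).
Fixpoint Cxsum (n : nat) (f : nat -> Cx) : Cx :=
  match n with
  | O => Cx0
  | S n' => Cxadd (Cxsum n' f) (f n')
  end.

(* ---------- Vectors / points of R^d ----------
   A point of R^d is encoded as x : nat -> R, of which only the coordinates
   x 0, ..., x (d-1) are meaningful.  All regularity notions below are
   relative to these d coordinates; in particular continuity in this sense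
   forces a function to ignore the coordinates >= d, so such functions are
   exactly functions on R^d. *)
Definition upd (x : nat -> R) (i : nat) (t : R) : nat -> R :=
  fun k => if Nat.eqb k i then t else x k.

Definition cont_d (d : nat) (g : (nat -> R) -> R) : Prop :=
  forall (x : nat -> R) (eps : R), 0 < eps ->
    exists delta, 0 < delta /\
      forall y : nat -> R,
        (forall i, (i < d)%nat -> Rabs (y i - x i) < delta) ->
        Rabs (g y - g x) < eps.

Definition partial_is (g : (nat -> R) -> R) (i : nat) (x : nat -> R) (l : R)
  : Prop :=
  derivable_pt_lim (fun t => g (upd x i t)) (x i) l.

(* the i-th partial derivative (the unique limit when it exists, 0 otherwise) *)
Definition pd (g : (nat -> R) -> R) (i : nat) (x : nat -> R) : R :=
  match excluded_middle_informative (exists l, partial_is g i x l) with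
  | left H => proj1_sig (constructive_indefinite_description _ H)
  | right _ => 0
  end.

Fixpoint Ck (k d : nat) (g : (nat -> R) -> R) : Prop :=
  match k with
  | O => cont_d d g
  | S k' => cont_d d g /\
            (forall i x, (i < d)%nat -> exists l, partial_is g i x l) /\
            (forall i, (i < d)%nat -> Ck k' d (pd g i))
  end.

Definition CkV (k d m : nat) (F : (nat -> R) -> (nat -> R)) : Prop :=
  forall c, (c < m)%nat -> Ck k d (fun x => F x c).

Definition CkC (k d m : nat) (F : (nat -> R) -> (nat -> Cx)) : Prop :=
  forall c, (c < m)%nat ->
    Ck k d (fun x => Re (F x c)) /\ Ck k d (fun x => Im (F x c)).

Definition pdC (g : (nat -> R) -> Cx) (i : nat) (x : nat -> R) : Cx :=
  mkCx (pd (fun y => Re (g y)) i x) (pd (fun y => Im (g y)) i x).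

Definition skew (d : nat) (S : nat -> nat -> R) : Prop :=
  forall i j, (i < d)%nat -> (j < d)%nat -> S j i = - S i j.

Definition unitary (d : nat) (U : nat -> nat -> Cx) : Prop :=
  forall i j, (i < d)%nat -> (j < d)%nat ->
    Cxsum d (fun k => Cxmul (Cxconj (U k i)) (U k j))
    = if Nat.eqb i j then Cx1 else Cx0.

Definition UHSU (d : nat) (U : nat -> nat -> Cx) (S : nat -> nat -> R)
  (i j : nat) : Cx :=
  Cxsum d (fun k => Cxsum d (fun l =>
    Cxmul (Cxmul (Cxconj (U k i)) (RtoCx (S k l))) (U l j))).

Definition diagonalizes (d : nat) (U : nat -> nat -> Cx) (S : nat -> nat -> R)
  (lam : nat -> Cx) : Prop :=
  forall i j, (i < d)%nat -> (j < d)%nat ->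
    UHSU d U S i j = if Nat.eqb i j then lam i else Cx0.

Definition solves_nonlinear (d m : nat) (A : nat -> nat -> R)
  (S : nat -> nat -> R) (f : (nat -> R) -> (nat -> R))
  (vs : (nat -> R) -> (nat -> R)) : Prop :=
  CkV 2 d m vs /\
  forall (x : nat -> R) c, (c < m)%nat ->
    rsum m (fun c' => A c c' *
              rsum d (fun i => pd (pd (fun y => vs y c') i) i x))
    + rsum d (fun i => rsum d (fun j => S i j * x j * pd (fun y => vs y c) i x))
    + f (vs x) c = 0.

Definition solves_eig (d m : nat) (A : nat -> nat -> R)
  (S : nat -> nat -> R) (f : (nat -> R) -> (nat -> R))
  (vs : (nat -> R) -> (nat -> R)) (lam : Cx)
  (v : (nat -> R) -> (nat -> Cx)) : Prop :=
  CkC 2 d m v /\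
  forall (x : nat -> R) c, (c < m)%nat ->
    Cxsub (Cxmul lam (v x c))
      (Cxadd (Cxadd
        (Cxsum m (fun c' => Cxmul (RtoCx (A c c'))
              (Cxsum d (fun i => pdC (fun y => pdC (fun z => v z c') i y) i x))))
        (Cxsum d (fun i => Cxsum d (fun j =>
              Cxmul (RtoCx (S i j * x j)) (pdC (fun y => v y c) i x)))))
        (Cxsum m (fun c' =>
              Cxmul (RtoCx (pd (fun y => f y c) c' (vs x))) (v x c'))))
    = Cx0.

Definition vfun (d : nat) (vs : (nat -> R) -> (nat -> R))
  (E : nat -> nat -> Cx) (b : nat -> Cx) : (nat -> R) -> (nat -> Cx) :=
  fun x c => Cxsum d (fun j =>
    Cxmul (RtoCx (pd (fun y => vs y c) j x))
          (Cxadd (Cxsum d (fun k => Cxmul (E j k) (RtoCx (x k)))) (b j))).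

Definition E0 : nat -> nat -> Cx := fun _ _ => Cx0.
Definition b_i (U : nat -> nat -> Cx) (l : nat) : nat -> Cx := fun a => U a l.
Definition E_ii (U : nat -> nat -> Cx) (i j : nat) : nat -> nat -> Cx :=
  fun a c => Cxsub (Cxmul (U a i) (U c j)) (Cxmul (U a j) (U c i)).
Definition b0 : nat -> Cx := fun _ => Cx0.

From Pilot Require Import Defs.
From Stdlib Require Import Reals Lra Lia FunctionalExtensionality ClassicalEpsilon.
From mathcomp Require all_boot all_algebra Rstruct complex.
Open Scope R_scope.

(* Differentiating the equation in [x_j] gives [L (d_j v* ) = - sum_i S_ij d_i v*], i.e. the
   columns of [Dv*] satisfy [L Dv* = - Dv* S]. For an affine field [W x = E x + b] with [E]
   skew, the Laplacian of [v = Dv* W] has no cross terms (skewness of [E] against symmetry of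
   the Hessian), and one finds [L v = Dv* (E S x - S W)]. Hence [lm v = L v] as soon as
   [lm E = E S - S E] and [lm b = - S b]. The columns [u_l] of [U] satisfy [S u_l = lam_l u_l]
   (since [U^H U = I] forces [U U^H = I]) and, [S] being real skew, [u_l^T S = - lam_l u_l^T]
   and [Re lam_l = 0]; these give the relations for [b = u_l] and for
   [E = u_i u_j^T - u_j u_i^T]. Complex fields are treated through their real and imaginary
   parts, on which [L] acts as a real operator. *)

Lemma rsum_ext n f g :
  (forall k, (k < n)%nat -> f k = g k) -> rsum n f = rsum n g.
Proof.
  induction n; simpl; intros H; auto.
  rewrite IHn, H by (intros; try apply H; lia); reflexivity.
Qed.

Ltac sum_congr := apply rsum_ext; intros.

Lemma rsum_plus n f g : rsum n (fun k => f k + g k) = rsum n f + rsum n g.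
Proof. induction n; simpl; [lra | rewrite IHn; lra]. Qed.

Lemma rsum_minus n f g : rsum n (fun k => f k - g k) = rsum n f - rsum n g.
Proof. induction n; simpl; [lra | rewrite IHn; lra]. Qed.

Lemma rsum_opp n f : rsum n (fun k => - f k) = - rsum n f.
Proof. induction n; simpl; [lra | rewrite IHn; lra]. Qed.

Lemma rsum_mult_l n c f : c * rsum n f = rsum n (fun k => c * f k).
Proof. induction n; simpl; [lra | rewrite <- IHn; lra]. Qed.

Lemma rsum_mult_r n c f : rsum n f * c = rsum n (fun k => f k * c).
Proof. induction n; simpl; [lra | rewrite <- IHn; lra]. Qed.

Lemma rsum_zero n f : (forall k, (k < n)%nat -> f k = 0) -> rsum n f = 0.
Proof.
  intros H. rewrite (rsum_ext n f (fun _ => 0)) by auto. clear H.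
  induction n; simpl; lra.
Qed.

Lemma rsum_swap n p F :
  rsum n (fun i => rsum p (fun j => F i j)) = rsum p (fun j => rsum n (fun i => F i j)).
Proof.
  induction n; simpl.
  - symmetry; apply rsum_zero; auto.
  - rewrite IHn, <- rsum_plus; reflexivity.
Qed.

Lemma rsum_kronecker n a f : (a < n)%nat ->
  rsum n (fun k => f k * (if Nat.eqb k a then 1 else 0)) = f a.
Proof.
  induction n; intros Ha; [lia |]. simpl.
  destruct (Nat.eqb_spec n a) as [-> | Hne].
  - rewrite rsum_zero; [lra |]. intros k Hk.
    destruct (Nat.eqb_spec k a); [lia | ring].
  - rewrite IHn by lia. ring.
Qed.

Lemma rsum_skew n a :
  (forall i j, (i < n)%nat -> (j < n)%nat -> a i j = - a j i) ->
  rsum n (fun i => rsum n (fun j => a i j)) = 0.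
Proof.
  intros Ha.
  enough (rsum n (fun i => rsum n (fun j => a i j))
          = - rsum n (fun i => rsum n (fun j => a i j))) by lra.
  rewrite rsum_swap at 1. rewrite <- rsum_opp. sum_congr.
  rewrite <- rsum_opp. sum_congr. rewrite Ha by auto. ring.
Qed.

Lemma Cx_eq z w : Re z = Re w -> Im z = Im w -> z = w.
Proof. destruct z, w; simpl; intros -> ->; reflexivity. Qed.

Lemma Cx_ring : ring_theory Cx0 Cx1 Cxadd Cxmul Cxsub Cxopp (@eq Cx).
Proof. constructor; intros; apply Cx_eq; simpl; ring. Qed.
Add Ring CxRing : Cx_ring.

Lemma Re_Cxsum n f : Re (Cxsum n f) = rsum n (fun k => Re (f k)).
Proof. induction n; simpl; auto. rewrite IHn; reflexivity. Qed.

Lemma Im_Cxsum n f : Im (Cxsum n f) = rsum n (fun k => Im (f k)).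
Proof. induction n; simpl; auto. rewrite IHn; reflexivity. Qed.

Lemma Cxsum_ext n f g :
  (forall k, (k < n)%nat -> f k = g k) -> Cxsum n f = Cxsum n g.
Proof.
  induction n; simpl; intros H; auto.
  rewrite IHn, H by (intros; try apply H; lia); reflexivity.
Qed.

Lemma Cxsum_opp n f : Cxsum n (fun k => Cxopp (f k)) = Cxopp (Cxsum n f).
Proof. induction n; simpl; [apply Cx_eq; simpl; ring | rewrite IHn; ring]. Qed.

Lemma Cxsum_minus n f g :
  Cxsum n (fun k => Cxsub (f k) (g k)) = Cxsub (Cxsum n f) (Cxsum n g).
Proof. induction n; simpl; [apply Cx_eq; simpl; ring | rewrite IHn; ring]. Qed.

Lemma Cxsum_mult_l n c f : Cxmul c (Cxsum n f) = Cxsum n (fun k => Cxmul c (f k)).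
Proof. induction n; simpl; [apply Cx_eq; simpl; ring | rewrite <- IHn; ring]. Qed.

Lemma Cxsum_mult_r n c f : Cxmul (Cxsum n f) c = Cxsum n (fun k => Cxmul (f k) c).
Proof. induction n; simpl; [apply Cx_eq; simpl; ring | rewrite <- IHn; ring]. Qed.

Lemma Cxsum_zero n f : (forall k, (k < n)%nat -> f k = Cx0) -> Cxsum n f = Cx0.
Proof.
  intros H. rewrite (Cxsum_ext n f (fun _ => Cx0)) by auto. clear H.
  induction n; simpl; [reflexivity | rewrite IHn; ring].
Qed.

Lemma upd_eq x i t : upd x i t i = t.
Proof. unfold upd. rewrite Nat.eqb_refl. reflexivity. Qed.

Lemma upd_neq x i t k : k <> i -> upd x i t k = x k.
Proof. unfold upd. intros H. destruct (Nat.eqb_spec k i); [lia | reflexivity]. Qed.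

Lemma upd_same x i : upd x i (x i) = x.
Proof.
  apply functional_extensionality. intro k. unfold upd.
  destruct (Nat.eqb_spec k i); subst; reflexivity.
Qed.

Lemma upd_upd x i t s : upd (upd x i t) i s = upd x i s.
Proof. apply functional_extensionality. intro k. unfold upd. destruct (Nat.eqb k i); auto. Qed.

Lemma upd_comm x i j a b : i <> j -> upd (upd x i a) j b = upd (upd x j b) i a.
Proof.
  intros H. apply functional_extensionality. intro k. unfold upd.
  destruct (Nat.eqb_spec k i), (Nat.eqb_spec k j); auto; lia.
Qed.

Lemma pd_unique g i x l : partial_is g i x l -> pd g i x = l.
Proof.
  intros H. unfold pd. destruct (excluded_middle_informative _) as [e | n].
  - destruct (constructive_indefinite_description _ e) as [l' Hl']; simpl.
    eapply uniqueness_limite; eauto.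
  - exfalso; eauto.
Qed.

Lemma pd_spec g i x : (exists l, partial_is g i x l) -> partial_is g i x (pd g i x).
Proof. intros [l H]. rewrite (pd_unique _ _ _ _ H). exact H. Qed.

Lemma pd_fun_unique g i l : (forall x, partial_is g i x (l x)) -> pd g i = l.
Proof. intros H. apply functional_extensionality. intro x. apply pd_unique, H. Qed.

Lemma partial_is_eq g i x l l' : partial_is g i x l -> l = l' -> partial_is g i x l'.
Proof. intros H <-; exact H. Qed.

Lemma partial_ext g h i x l :
  (forall y, g y = h y) -> partial_is g i x l -> partial_is h i x l.
Proof. intros E. replace h with g by (apply functional_extensionality; auto). auto. Qed.

Lemma partial_const a i x : partial_is (fun _ => a) i x 0.
Proof. apply derivable_pt_lim_const. Qed.

Lemma partial_plus g h i x l1 l2 : partial_is g i x l1 -> partial_is h i x l2 ->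
  partial_is (fun y => g y + h y) i x (l1 + l2).
Proof. apply (derivable_pt_lim_plus (fun t => g (upd x i t)) (fun t => h (upd x i t))). Qed.

Lemma partial_mult g h i x l1 l2 : partial_is g i x l1 -> partial_is h i x l2 ->
  partial_is (fun y => g y * h y) i x (l1 * h x + g x * l2).
Proof.
  intros H1 H2.
  pose proof (derivable_pt_lim_mult (fun t => g (upd x i t)) (fun t => h (upd x i t))
                _ _ _ H1 H2) as H.
  unfold mult_fct in H. rewrite !upd_same in H. exact H.
Qed.

Lemma partial_scal a g i x l : partial_is g i x l ->
  partial_is (fun y => a * g y) i x (a * l).
Proof.
  intros H. eapply partial_is_eq; [apply partial_mult; [apply partial_const | exact H] | cbv beta; ring].
Qed.

Lemma partial_coord k i x : partial_is (fun y => y k) i x (if Nat.eqb k i then 1 else 0).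
Proof.
  unfold partial_is, upd. destruct (Nat.eqb k i).
  - apply derivable_pt_lim_id.
  - apply derivable_pt_lim_const.
Qed.

Lemma partial_rsum n F i x l :
  (forall j, (j < n)%nat -> partial_is (F j) i x (l j)) ->
  partial_is (fun y => rsum n (fun j => F j y)) i x (rsum n l).
Proof.
  induction n; intros H; simpl.
  - apply partial_const.
  - apply partial_plus; [apply IHn; intros |]; apply H; lia.
Qed.

Lemma partial_of_zero g i x l : (forall y, g y = 0) -> partial_is g i x l -> l = 0.
Proof.
  intros Hz H. rewrite <- (pd_unique _ _ _ _ H). apply pd_unique.
  eapply partial_ext; [| apply (partial_const 0)]. intros; rewrite Hz; reflexivity.
Qed.

Lemma cont_d_depends_on_first d g x y :
  cont_d d g -> (forall i, (i < d)%nat -> y i = x i) -> g y = g x.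
Proof.
  intros Hc Hy. destruct (Req_dec (g y) (g x)) as [E | E]; auto. exfalso.
  destruct (Hc x (Rabs (g y - g x))) as [dl [Hd Hdl]]; [apply Rabs_pos_lt; lra |].
  apply (Rlt_irrefl (Rabs (g y - g x))), Hdl. intros i Hi.
  rewrite Hy, Rminus_diag, Rabs_R0 by auto. exact Hd.
Qed.

Lemma cont_const d a : cont_d d (fun _ => a).
Proof.
  intros x eps He. exists 1. split; [lra |]. intros.
  rewrite Rminus_diag, Rabs_R0. exact He.
Qed.

Lemma cont_coord d k : (k < d)%nat -> cont_d d (fun y => y k).
Proof. intros Hk x eps He. exists eps. split; auto. Qed.

Lemma cont_plus d g h : cont_d d g -> cont_d d h -> cont_d d (fun y => g y + h y).
Proof.
  intros Hg Hh x eps He.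
  destruct (Hg x (eps / 2)) as [d1 [Hd1 H1]]; [lra |].
  destruct (Hh x (eps / 2)) as [d2 [Hd2 H2]]; [lra |].
  exists (Rmin d1 d2). split; [apply Rmin_pos; auto |]. intros y Hy.
  assert (A1 := H1 y (fun i Hi => Rlt_le_trans _ _ _ (Hy i Hi) (Rmin_l _ _))).
  assert (A2 := H2 y (fun i Hi => Rlt_le_trans _ _ _ (Hy i Hi) (Rmin_r _ _))).
  replace (g y + h y - (g x + h x)) with ((g y - g x) + (h y - h x)) by ring.
  eapply Rle_lt_trans; [apply Rabs_triang | lra].
Qed.

Lemma cont_mult d g h : cont_d d g -> cont_d d h -> cont_d d (fun y => g y * h y).
Proof.
  intros Hg Hh x eps He.
  set (a := g x). set (b := h x).
  pose proof (Rabs_pos a). pose proof (Rabs_pos b).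
  set (eta := Rmin 1 (eps / (Rabs a + Rabs b + 1))).
  assert (Heta : 0 < eta) by (apply Rmin_pos; [lra | apply Rdiv_lt_0_compat; lra]).
  assert (Heta1 : eta <= 1) by apply Rmin_l.
  assert (HetaK : eta * (Rabs a + Rabs b + 1) <= eps).
  { apply (Rle_trans _ (eps / (Rabs a + Rabs b + 1) * (Rabs a + Rabs b + 1))).
    - apply Rmult_le_compat_r; [lra | apply Rmin_r].
    - right; field; lra. }
  destruct (Hg x eta Heta) as [d1 [Hd1 H1]].
  destruct (Hh x eta Heta) as [d2 [Hd2 H2]].
  exists (Rmin d1 d2). split; [apply Rmin_pos; auto |]. intros y Hy.
  assert (Hu := H1 y (fun i Hi => Rlt_le_trans _ _ _ (Hy i Hi) (Rmin_l _ _))).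
  assert (Hv := H2 y (fun i Hi => Rlt_le_trans _ _ _ (Hy i Hi) (Rmin_r _ _))).
  fold a b in Hu, Hv |- *.
  pose proof (Rabs_pos (g y - a)). pose proof (Rabs_pos (h y - b)).
  replace (g y * h y - a * b)
    with (a * (h y - b) + (g y - a) * b + (g y - a) * (h y - b)) by ring.
  apply (Rle_lt_trans _ (Rabs a * Rabs (h y - b) + Rabs (g y - a) * Rabs b
                         + Rabs (g y - a) * Rabs (h y - b))).
  - rewrite <- !Rabs_mult.
    eapply Rle_trans; [apply Rabs_triang | apply Rplus_le_compat_r, Rabs_triang].
  - nra.
Qed.

Lemma Ck_cont k d g : Ck k d g -> cont_d d g.
Proof. destruct k; simpl; tauto. Qed.

Lemma Ck_S k d g : Ck (S k) d g -> Ck k d g.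
Proof.
  revert g; induction k; intros g H; simpl in *; [tauto |].
  destruct H as [H1 [H2 H3]]. repeat split; auto.
Qed.

Lemma Ck_pd k d g i : Ck (S k) d g -> (i < d)%nat -> Ck k d (pd g i).
Proof. simpl. intros [_ [_ H]] Hi. auto. Qed.

Lemma Ck_partial k d g i x : Ck (S k) d g -> (i < d)%nat -> partial_is g i x (pd g i x).
Proof. simpl. intros [_ [H _]] Hi. apply pd_spec; auto. Qed.

Lemma Ck_const k d a : Ck k d (fun _ => a).
Proof.
  revert a; induction k; intro a; simpl; [apply cont_const |].
  split; [apply cont_const | split].
  - intros. exists 0. apply partial_const.
  - intros i Hi. rewrite (pd_fun_unique _ i (fun _ => 0)); [apply IHk |].
    intros; apply partial_const.
Qed.

Lemma Ck_coord k d j : (j < d)%nat -> Ck k d (fun y => y j).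
Proof.
  intros Hj. destruct k; simpl; [apply cont_coord; auto |].
  split; [apply cont_coord; auto | split].
  - intros. eexists. apply partial_coord.
  - intros i Hi. rewrite (pd_fun_unique _ i (fun _ => if Nat.eqb j i then 1 else 0)).
    + apply Ck_const.
    + intros; apply partial_coord.
Qed.

Lemma Ck_plus k d g h : Ck k d g -> Ck k d h -> Ck k d (fun y => g y + h y).
Proof.
  revert g h; induction k; intros g h Hg Hh; [apply cont_plus; auto |].
  split; [apply cont_plus; eapply Ck_cont; eauto | split].
  - intros i x Hi. eexists. apply partial_plus; apply (Ck_partial k d); eauto.
  - intros i Hi. rewrite (pd_fun_unique _ i (fun x => pd g i x + pd h i x)).
    + apply IHk; apply Ck_pd; auto.
    + intros x. apply partial_plus; apply (Ck_partial k d); eauto.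
Qed.

Lemma Ck_mult k d g h : Ck k d g -> Ck k d h -> Ck k d (fun y => g y * h y).
Proof.
  revert g h; induction k; intros g h Hg Hh; [apply cont_mult; auto |].
  split; [apply cont_mult; eapply Ck_cont; eauto | split].
  - intros i x Hi. eexists. apply partial_mult; apply (Ck_partial k d); eauto.
  - intros i Hi. rewrite (pd_fun_unique _ i (fun x => pd g i x * h x + g x * pd h i x)).
    + apply Ck_plus; apply IHk; try (apply Ck_pd; auto); apply Ck_S; auto.
    + intros x. apply partial_mult; apply (Ck_partial k d); eauto.
Qed.

Lemma Ck_rsum k d n F : (forall j, (j < n)%nat -> Ck k d (F j)) ->
  Ck k d (fun y => rsum n (fun j => F j y)).
Proof.
  induction n; intros H; simpl.
  - apply Ck_const.
  - apply Ck_plus; [apply IHn; intros |]; apply H; lia.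
Qed.

Lemma derivable_pt_lim_small_increment f t0 l : derivable_pt_lim f t0 l ->
  forall e, 0 < e -> exists dl, 0 < dl /\
    forall h, Rabs h < dl -> Rabs (f (t0 + h) - f t0) < e.
Proof.
  intros Hf e He.
  assert (Hc : continuity_pt f t0) by (apply derivable_continuous_pt; exists l; exact Hf).
  destruct (Hc e He) as [dl [Hdl H]].
  exists dl. split; auto. intros h Hh.
  destruct (Req_dec h 0) as [-> | Hn].
  - rewrite Rplus_0_r, Rminus_diag, Rabs_R0. exact He.
  - apply (H (t0 + h)). split.
    + split; [exact I | lra].
    + simpl. unfold R_dist. replace (t0 + h - t0) with h by ring. exact Hh.
Qed.

Lemma uniform_delta_lt n (Q : nat -> R -> Prop) :
  (forall c, (c < n)%nat -> exists dl, 0 < dl /\ forall h, Rabs h < dl -> Q c h) ->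
  exists dl, 0 < dl /\ forall h, Rabs h < dl -> forall c, (c < n)%nat -> Q c h.
Proof.
  induction n; intros H.
  - exists 1. split; [lra |]. intros; lia.
  - destruct IHn as [d1 [Hd1 H1]]; [intros; apply H; lia |].
    destruct (H n) as [d2 [Hd2 H2]]; [lia |].
    exists (Rmin d1 d2). split; [apply Rmin_pos; auto |]. intros h Hh c Hc.
    destruct (Nat.eq_dec c n) as [-> | Hne].
    + apply H2. eapply Rlt_le_trans; [exact Hh | apply Rmin_r].
    + apply H1; [eapply Rlt_le_trans; [exact Hh | apply Rmin_l] | lia].
Qed.

Lemma MVT_unordered f f' a b :
  (forall c, Rmin a b <= c <= Rmax a b -> derivable_pt_lim f c (f' c)) ->
  exists c, Rmin a b <= c <= Rmax a b /\ f b - f a = f' c * (b - a).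
Proof.
  intros H. destruct (Rtotal_order a b) as [L | [-> | G]].
  - rewrite Rmin_left, Rmax_right in * by lra.
    destruct (MVT_cor2 f f' a b L H) as [c [E Hc]]. exists c. split; [lra | exact E].
  - exists b. rewrite Rmin_left, Rmax_left by lra. split; [lra | ring].
  - rewrite Rmin_right, Rmax_left in * by lra.
    destruct (MVT_cor2 f f' b a G H) as [c [E Hc]]. exists c. split; [lra | lra].
Qed.

Lemma derivable_pt_lim_factor F psi t0 p q :
  derivable_pt_lim psi t0 q ->
  (forall e, 0 < e -> exists dl, 0 < dl /\ forall h, Rabs h < dl ->
     exists ph, Rabs (ph - p) < e /\ F (t0 + h) - F t0 = ph * (psi (t0 + h) - psi t0)) ->
  derivable_pt_lim F t0 (p * q).
Proof.
  intros Hpsi HF eps He.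
  pose proof (Rabs_pos p). pose proof (Rabs_pos q).
  destruct (Hpsi (Rmin 1 (eps / (2 * (Rabs p + 1))))) as [dq Hdq].
  { apply Rmin_pos; [lra | apply Rdiv_lt_0_compat; lra]. }
  destruct (HF (eps / (2 * (Rabs q + 1)))) as [dl [Hdl Hph]]; [apply Rdiv_lt_0_compat; lra |].
  assert (Hdq0 : 0 < dq) by apply cond_pos.
  exists (mkposreal _ (Rmin_pos _ _ Hdl Hdq0)). simpl. intros h Hn Hh.
  destruct (Hph h (Rlt_le_trans _ _ _ Hh (Rmin_l _ _))) as [ph [Hp E]].
  specialize (Hdq h Hn (Rlt_le_trans _ _ _ Hh (Rmin_r _ _))).
  set (r := (psi (t0 + h) - psi t0) / h) in Hdq.
  replace ((F (t0 + h) - F t0) / h - p * q) with ((ph - p) * r + p * (r - q))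
    by (rewrite E; unfold r; field; exact Hn).
  assert (Hr1 : Rabs (r - q) < 1) by (eapply Rlt_le_trans; [exact Hdq | apply Rmin_l]).
  assert (Hr2 : Rabs (r - q) * (2 * (Rabs p + 1)) < eps).
  { apply (Rmult_lt_compat_r (2 * (Rabs p + 1))) in Hdq; [| lra].
    eapply Rlt_le_trans; [exact Hdq |].
    apply (Rle_trans _ (eps / (2 * (Rabs p + 1)) * (2 * (Rabs p + 1)))).
    - apply Rmult_le_compat_r; [lra | apply Rmin_r].
    - right; field; lra. }
  assert (Hp2 : Rabs (ph - p) * (2 * (Rabs q + 1)) < eps).
  { apply (Rmult_lt_compat_r (2 * (Rabs q + 1))) in Hp; [| lra].
    unfold Rdiv in Hp. rewrite Rmult_assoc, Rinv_l, Rmult_1_r in Hp by lra. exact Hp. }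
  assert (Hr : Rabs r < Rabs q + 1).
  { replace r with ((r - q) + q) by ring. eapply Rle_lt_trans; [apply Rabs_triang | lra]. }
  pose proof (Rabs_pos (ph - p)). pose proof (Rabs_pos (r - q)).
  eapply Rle_lt_trans; [apply Rabs_triang |]. rewrite !Rabs_mult. nra.
Qed.

Lemma second_difference_mvt (G Gu Guv : R -> R -> R) a b h : 0 < h ->
  (forall u v, derivable_pt_lim (fun t => G t v) u (Gu u v)) ->
  (forall u v, derivable_pt_lim (fun t => Gu u t) v (Guv u v)) ->
  exists xi eta, a < xi < a + h /\ b < eta < b + h /\
    G (a + h) (b + h) - G (a + h) b - G a (b + h) + G a b = Guv xi eta * (h * h).
Proof.
  intros Hh HGu HGuv.
  destruct (MVT_cor2 (fun u => G u (b + h) - G u b) (fun u => Gu u (b + h) - Gu u b)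
              a (a + h)) as [xi [E1 Hxi]]; [lra | intros; apply derivable_pt_lim_minus; auto |].
  destruct (MVT_cor2 (fun v => Gu xi v) (fun v => Guv xi v) b (b + h)) as [eta [E2 Heta]];
    [lra | intros; auto |].
  exists xi, eta. split; [exact Hxi | split; [exact Heta |]].
  simpl in E1, E2.
  replace (a + h - a) with h in E1 by ring. replace (b + h - b) with h in E2 by ring.
  transitivity (G (a + h) (b + h) - G (a + h) b - (G a (b + h) - G a b)); [ring |].
  rewrite E1, E2. ring.
Qed.

(** * Symmetry of second derivatives *)

Section Schwarz.
Variables (d : nat) (g : (nat -> R) -> R) (i j : nat) (x : nat -> R).
Hypotheses (Hg : Ck 2 d g) (Hi : (i < d)%nat) (Hj : (j < d)%nat) (Hij : i <> j).

Let P u v := upd (upd x i u) j v.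

Let partial_along_i G u v : partial_is G i (P u v) (pd G i (P u v)) ->
  derivable_pt_lim (fun t => G (P t v)) u (pd G i (P u v)).
Proof.
  unfold partial_is. intros H.
  replace (P u v i) with u in H by (unfold P; rewrite upd_neq, upd_eq; auto).
  eapply derivable_pt_lim_ext; [| exact H]. intros t. simpl.
  unfold P. rewrite upd_comm, upd_upd by auto. reflexivity.
Qed.

Let partial_along_j G u v : partial_is G j (P u v) (pd G j (P u v)) ->
  derivable_pt_lim (fun t => G (P u t)) v (pd G j (P u v)).
Proof.
  unfold partial_is. intros H.
  replace (P u v j) with v in H by (unfold P; rewrite upd_eq; auto).
  eapply derivable_pt_lim_ext; [| exact H]. intros t. simpl.
  unfold P. rewrite upd_upd. reflexivity.
Qed.

Let P_close u v dl : 0 < dl -> Rabs (u - x i) < dl -> Rabs (v - x j) < dl ->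
  forall k, Rabs (P u v k - x k) < dl.
Proof.
  intros Hd Hu Hv k. unfold P, upd.
  destruct (Nat.eqb_spec k j); [subst; auto |].
  destruct (Nat.eqb_spec k i); [subst; auto |].
  rewrite Rminus_diag, Rabs_R0. exact Hd.
Qed.

(* Both mixed partials compute the same second difference over a square of side [h]. *)
Let mixed_partials_meet h : 0 < h -> exists xi eta xi' eta',
  x i < xi < x i + h /\ x j < eta < x j + h /\
  x i < xi' < x i + h /\ x j < eta' < x j + h /\
  pd (pd g i) j (P xi eta) = pd (pd g j) i (P xi' eta').
Proof.
  intros Hh.
  destruct (second_difference_mvt (fun u v => g (P u v)) (fun u v => pd g i (P u v))
              (fun u v => pd (pd g i) j (P u v)) (x i) (x j) h Hh)
    as (xi & eta & Hxi & Heta & E1).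
  { intros; apply partial_along_i, (Ck_partial 1 d); auto. }
  { intros; apply partial_along_j, (Ck_partial 0 d); [apply Ck_pd |]; auto. }
  destruct (second_difference_mvt (fun v u => g (P u v)) (fun v u => pd g j (P u v))
              (fun v u => pd (pd g j) i (P u v)) (x j) (x i) h Hh)
    as (eta' & xi' & Heta' & Hxi' & E2).
  { intros; apply partial_along_j, (Ck_partial 1 d); auto. }
  { intros; apply partial_along_i, (Ck_partial 0 d); [apply Ck_pd |]; auto. }
  exists xi, eta, xi', eta'. repeat split; try lra.
  simpl in E1, E2. apply (Rmult_eq_reg_r (h * h)); [lra | nra].
Qed.

Lemma schwarz_neq : pd (pd g i) j x = pd (pd g j) i x.
Proof.
  set (K1 := pd (pd g i) j). set (K2 := pd (pd g j) i).
  assert (CK1 : cont_d d K1) by (apply (Ck_pd 0); [apply Ck_pd |]; auto).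
  assert (CK2 : cont_d d K2) by (apply (Ck_pd 0); [apply Ck_pd |]; auto).
  assert (Hclose : forall eps, 0 < eps -> Rabs (K1 x - K2 x) < 2 * eps).
  { intros eps He.
    destruct (CK1 x eps He) as [d1 [Hd1 H1]].
    destruct (CK2 x eps He) as [d2 [Hd2 H2]].
    set (h := Rmin d1 d2 / 2).
    assert (Hh : 0 < h) by (unfold h; pose proof (Rmin_pos _ _ Hd1 Hd2); lra).
    assert (Hh1 : h < d1) by (unfold h; pose proof (Rmin_l d1 d2); lra).
    assert (Hh2 : h < d2) by (unfold h; pose proof (Rmin_r d1 d2); lra).
    destruct (mixed_partials_meet h Hh) as (xi & eta & xi' & eta' & Hxi & Heta & Hxi' & Heta' & EQ).
    assert (A1 : Rabs (K1 (P xi eta) - K1 x) < eps).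
    { apply H1. intros k _. apply P_close; try rewrite Rabs_right; lra. }
    assert (A2 : Rabs (K2 (P xi' eta') - K2 x) < eps).
    { apply H2. intros k _. apply P_close; try rewrite Rabs_right; lra. }
    fold K1 K2 in EQ. rewrite EQ in A1.
    replace (K1 x - K2 x) with (- (K2 (P xi' eta') - K1 x) + (K2 (P xi' eta') - K2 x)) by ring.
    eapply Rle_lt_trans; [apply Rabs_triang |]. rewrite Rabs_Ropp. lra. }
  destruct (Req_dec (K1 x) (K2 x)) as [E | E]; auto. exfalso.
  assert (Hp : 0 < Rabs (K1 x - K2 x)) by (apply Rabs_pos_lt; lra).
  specialize (Hclose (Rabs (K1 x - K2 x) / 4)). lra.
Qed.
End Schwarz.

Lemma schwarz d g i j : Ck 2 d g -> (i < d)%nat -> (j < d)%nat ->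
  pd (pd g i) j = pd (pd g j) i.
Proof.
  intros. apply functional_extensionality. intro x.
  destruct (Nat.eq_dec i j) as [-> | Hn]; [reflexivity | apply (schwarz_neq d); auto].
Qed.

(** * Chain rule *)

Lemma derivable_pt_lim_rsum n F x l :
  (forall c, (c < n)%nat -> derivable_pt_lim (F c) x (l c)) ->
  derivable_pt_lim (fun t => rsum n (fun c => F c t)) x (rsum n l).
Proof.
  induction n; intros H; simpl.
  - apply derivable_pt_lim_const.
  - apply (derivable_pt_lim_plus (fun t => rsum n (fun c => F c t)) (F n));
      [apply IHn; intros |]; apply H; lia.
Qed.

Lemma rsum_telescope n (G : nat -> R) : rsum n (fun c => G (S c) - G c) = G n - G O.
Proof. induction n; simpl; [ring | rewrite IHn; ring]. Qed.

Section Chain.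
Variables (m : nat) (g : (nat -> R) -> R) (gam : R -> nat -> R) (t0 : R) (gam' : nat -> R).
Hypothesis Hg : Ck 1 m g.
Hypothesis Hgam : forall c, (c < m)%nat -> derivable_pt_lim (fun t => gam t c) t0 (gam' c).

(* The increment of [g] along the curve telescopes through the points [z n t], which
   move one more coordinate at each step. *)
Let z n t := fun k => if Nat.ltb k n then gam t k else gam t0 k.

Let z_t0 n : z n t0 = gam t0.
Proof. apply functional_extensionality. intro k. unfold z. destruct (Nat.ltb k n); auto. Qed.

Let z_S n t : z (S n) t = upd (z n t) n (gam t n).
Proof.
  apply functional_extensionality. intro k. unfold z, upd.
  destruct (Nat.eqb_spec k n), (Nat.ltb_spec k (S n)), (Nat.ltb_spec k n);
    subst; auto; lia.
Qed.

Let z_frozen n t : z n t = upd (z n t) n (gam t0 n).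
Proof.
  apply functional_extensionality. intro k. unfold z, upd.
  destruct (Nat.eqb_spec k n), (Nat.ltb_spec k n); subst; auto; lia.
Qed.

Let chain_step c : (c < m)%nat ->
  derivable_pt_lim (fun t => g (z (S c) t) - g (z c t)) t0 (pd g c (gam t0) * gam' c).
Proof.
  intros Hc. apply derivable_pt_lim_factor with (psi := fun t => gam t c); [auto |].
  intros e He.
  destruct (Ck_cont 0 m (pd g c) (Ck_pd 0 m g c Hg Hc) (gam t0) e He) as [dc [Hdc Hcont]].
  destruct (uniform_delta_lt m (fun k h => Rabs (gam (t0 + h) k - gam t0 k) < dc))
    as [dl [Hdl Hgc]].
  { intros k Hk. apply (derivable_pt_lim_small_increment (fun t => gam t k) t0 (gam' k)); auto. }
  exists dl. split; [exact Hdl |]. intros h Hh.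
  set (t := t0 + h). set (zz := z c t).
  destruct (MVT_unordered (fun s => g (upd zz c s)) (fun s => pd g c (upd zz c s))
              (gam t0 c) (gam t c)) as [xi [Hxi E]].
  { intros s _. pose proof (Ck_partial 0 m g c (upd zz c s) Hg Hc) as A.
    unfold partial_is in A. rewrite upd_eq in A.
    eapply derivable_pt_lim_ext; [| exact A]. intro u. simpl. rewrite upd_upd. reflexivity. }
  exists (pd g c (upd zz c xi)). split.
  - apply Hcont. intros k Hk. unfold zz, z, upd.
    destruct (Nat.eqb_spec k c) as [-> | Hne].
    + specialize (Hgc h Hh c Hc). fold t in Hgc.
      unfold Rmin, Rmax in Hxi. destruct (Rle_dec (gam t0 c) (gam t c)).
      * rewrite Rabs_right in Hgc |- *; lra.
      * rewrite Rabs_left1 in Hgc |- *; lra.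
    + destruct (Nat.ltb k c); [apply Hgc; auto |].
      rewrite Rminus_diag, Rabs_R0. exact Hdc.
  - rewrite !z_t0, Rminus_diag, Rminus_0_r, z_S. fold zz.
    rewrite <- E. unfold zz. rewrite <- (z_frozen c t). reflexivity.
Qed.

Lemma chain_rule :
  derivable_pt_lim (fun t => g (gam t)) t0 (rsum m (fun c => pd g c (gam t0) * gam' c)).
Proof.
  pose proof (derivable_pt_lim_plus _ _ t0 _ _
    (derivable_pt_lim_rsum m (fun c t => g (z (S c) t) - g (z c t)) t0 _
       (fun c Hc => chain_step c Hc))
    (derivable_pt_lim_const (g (gam t0)) t0)) as D.
  rewrite Rplus_0_r in D.
  eapply derivable_pt_lim_ext; [| exact D]. intro t. unfold plus_fct, fct_cte.
  rewrite (rsum_telescope m (fun c => g (z c t))).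
  replace (z 0 t) with (gam t0)
    by (apply functional_extensionality; intro k; unfold z; destruct (Nat.ltb_spec k 0); [lia | auto]).
  rewrite (cont_d_depends_on_first m g (gam t) (z m t)); [ring | apply (Ck_cont 1); auto |].
  intros k Hk. unfold z. destruct (Nat.ltb_spec k m); [reflexivity | lia].
Qed.
End Chain.

(** * The linearized operator *)

Definition laplacian d (g : (nat -> R) -> R) x := rsum d (fun i => pd (pd g i) i x).

Definition drift d (S : nat -> nat -> R) (g : (nat -> R) -> R) x :=
  rsum d (fun i => rsum d (fun j => S i j * x j * pd g i x)).

Lemma partial_laplacian d g j x : Ck 3 d g -> (j < d)%nat ->
  partial_is (laplacian d g) j x (laplacian d (pd g j) x).
Proof.
  intros Hg Hj. apply partial_rsum. intros i Hi.
  rewrite (schwarz d g j i), <- (schwarz d (pd g i) i j) by (try apply Ck_pd; auto; apply Ck_S; auto).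
  apply (Ck_partial 0 d); [do 2 (apply Ck_pd; auto) | auto].
Qed.

Lemma partial_drift d S g j x : Ck 2 d g -> (j < d)%nat ->
  partial_is (drift d S g) j x (drift d S (pd g j) x + rsum d (fun i => S i j * pd g i x)).
Proof.
  intros Hg Hj. eapply partial_is_eq.
  - apply partial_rsum. intros i Hi. apply partial_rsum. intros a Ha.
    apply partial_mult; [apply partial_scal, partial_coord |].
    apply (Ck_partial 0 d); [apply Ck_pd |]; auto.
  - unfold drift. rewrite <- rsum_plus. apply rsum_ext. intros i Hi.
    rewrite <- (rsum_kronecker d j (fun a => S i a * pd g i x)), <- rsum_plus by auto.
    sum_congr. rewrite (schwarz d g i j) by auto. ring.
Qed.

Definition affine d (M : nat -> nat -> R) (b : nat -> R) (x : nat -> R) j :=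
  rsum d (fun k => M j k * x k) + b j.

Definition deriv_affine d (g : (nat -> R) -> R) M b x :=
  rsum d (fun j => pd g j x * affine d M b x j).

Section DerivAffine.
Variables (d : nat) (g : (nat -> R) -> R) (M : nat -> nat -> R) (b : nat -> R).
Hypothesis Hg : Ck 3 d g.
Hypothesis HM : forall i j, (i < d)%nat -> (j < d)%nat -> M j i = - M i j.

Lemma partial_affine x i j : (i < d)%nat -> partial_is (fun y => affine d M b y j) i x (M j i).
Proof.
  intros Hi. eapply partial_is_eq.
  - apply partial_plus; [| apply partial_const]. apply partial_rsum. intros k _.
    apply partial_scal, partial_coord.
  - rewrite Rplus_0_r. apply rsum_kronecker; auto.
Qed.

Lemma Ck_affine k j : Ck k d (fun y => affine d M b y j).
Proof.
  apply Ck_plus; [| apply Ck_const]. apply Ck_rsum. intros.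
  apply Ck_mult; [apply Ck_const | apply Ck_coord; auto].
Qed.

Lemma Ck_deriv_affine : Ck 2 d (deriv_affine d g M b).
Proof.
  apply Ck_rsum. intros j Hj. apply Ck_mult; [apply Ck_pd; auto | apply Ck_affine].
Qed.

Lemma pd_deriv_affine i : (i < d)%nat ->
  pd (deriv_affine d g M b) i
  = fun x => rsum d (fun j => pd (pd g j) i x * affine d M b x j + pd g j x * M j i).
Proof.
  intros Hi. apply pd_fun_unique. intros x. apply partial_rsum. intros j Hj.
  apply partial_mult; [apply (Ck_partial 1 d) | apply partial_affine]; auto.
  apply Ck_pd; auto.
Qed.

(* The cross terms [2 (d_i d_j g) M_ji] cancel because [M] is skew and the Hessian symmetric. *)
Lemma laplacian_deriv_affine x :
  laplacian d (deriv_affine d g M b) x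
  = rsum d (fun j => affine d M b x j * laplacian d (pd g j) x).
Proof.
  assert (Hsecond : forall i, (i < d)%nat ->
    pd (pd (deriv_affine d g M b) i) i x
    = rsum d (fun j => pd (pd (pd g j) i) i x * affine d M b x j)
      + 2 * rsum d (fun j => pd (pd g j) i x * M j i)).
  { intros i Hi. rewrite pd_deriv_affine, rsum_mult_l, <- rsum_plus by auto.
    apply pd_unique. eapply partial_is_eq.
    - apply partial_rsum. intros j Hj. apply partial_plus; apply partial_mult.
      + apply (Ck_partial 0 d); [do 2 (apply Ck_pd; auto) | auto].
      + apply partial_affine; auto.
      + apply (Ck_partial 1 d); [apply Ck_pd |]; auto.
      + apply partial_const.
    - sum_congr. ring. }
  unfold laplacian. rewrite (rsum_ext d _ _ Hsecond), rsum_plus, <- rsum_mult_l.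
  rewrite (rsum_skew d (fun i j => pd (pd g j) i x * M j i)).
  2:{ intros i j Hi Hj. rewrite (schwarz d g j i), (HM i j) by (auto; apply Ck_S; auto). ring. }
  rewrite Rmult_0_r, Rplus_0_r, rsum_swap. sum_congr.
  rewrite rsum_mult_l. sum_congr. ring.
Qed.

Lemma drift_deriv_affine S x :
  drift d S (deriv_affine d g M b) x
  = rsum d (fun j => affine d M b x j * drift d S (pd g j) x)
    + rsum d (fun j => pd g j x * rsum d (fun k => rsum d (fun a => M j a * S a k) * x k)).
Proof.
  unfold drift.
  transitivity
    (rsum d (fun i => rsum d (fun a => rsum d (fun j =>
       affine d M b x j * (S i a * x a * pd (pd g j) i x))))
     + rsum d (fun i => rsum d (fun a => rsum d (fun j =>
       pd g j x * (M j i * S i a * x a))))).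
  { rewrite <- rsum_plus. sum_congr. rewrite <- rsum_plus. sum_congr.
    rewrite pd_deriv_affine, rsum_mult_l, <- rsum_plus by auto. sum_congr. ring. }
  f_equal.
  - rewrite (rsum_ext d _ (fun i => rsum d (fun j => rsum d (fun a =>
      affine d M b x j * (S i a * x a * pd (pd g j) i x))))) by (intros; apply rsum_swap).
    rewrite rsum_swap. sum_congr. rewrite rsum_mult_l. sum_congr.
    symmetry; apply rsum_mult_l.
  - rewrite (rsum_ext d _ (fun i => rsum d (fun j => rsum d (fun a =>
      pd g j x * (M j i * S i a * x a))))) by (intros; apply rsum_swap).
    rewrite rsum_swap. sum_congr. rewrite rsum_mult_l, rsum_swap. sum_congr.
    rewrite rsum_mult_r, rsum_mult_l. sum_congr. ring.
Qed.
End DerivAffine.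

(* The shape [r P - s Q] covers both the real part ([P, Q] = [Re E, Im E], [r + i s = lm])
   and the imaginary part ([P, Q] = [Im E, Re E], [r - i s = lm]) of [lm E = E S - S E]. *)
Lemma affine_commutator d S P Q p q r s :
  (forall a k, (a < d)%nat -> (k < d)%nat ->
     r * P a k - s * Q a k
     = rsum d (fun e => P a e * S e k) - rsum d (fun e => S a e * P e k)) ->
  (forall a, (a < d)%nat -> r * p a - s * q a = - rsum d (fun e => S a e * p e)) ->
  forall x a, (a < d)%nat ->
  r * affine d P p x a - s * affine d Q q x a
  = rsum d (fun k => rsum d (fun e => P a e * S e k) * x k)
    - rsum d (fun j => S a j * affine d P p x j).
Proof.
  intros HPQ Hpq x a Ha. unfold affine.
  assert (EL : r * (rsum d (fun k => P a k * x k) + p a) - s * (rsum d (fun k => Q a k * x k) + q a)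
               = rsum d (fun k => (r * P a k - s * Q a k) * x k) + (r * p a - s * q a)).
  { rewrite (rsum_ext d (fun k => (r * P a k - s * Q a k) * x k)
               (fun k => r * (P a k * x k) - s * (Q a k * x k))) by (intros; ring).
    rewrite rsum_minus, <- !rsum_mult_l. ring. }
  assert (ER : rsum d (fun j => S a j * (rsum d (fun k => P j k * x k) + p j))
               = rsum d (fun k => rsum d (fun e => S a e * P e k) * x k)
                 + rsum d (fun e => S a e * p e)).
  { rewrite (rsum_ext d _ (fun j => rsum d (fun k => S a j * P j k * x k) + S a j * p j))
      by (intros; rewrite Rmult_plus_distr_l, rsum_mult_l; f_equal; sum_congr; ring).
    rewrite rsum_plus, rsum_swap. f_equal. sum_congr. symmetry; apply rsum_mult_r. }
  rewrite EL, ER, Hpq by auto.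
  rewrite (rsum_ext d _ (fun k => rsum d (fun e => P a e * S e k) * x k
                                 - rsum d (fun e => S a e * P e k) * x k))
    by (intros; rewrite HPQ by auto; ring).
  rewrite rsum_minus. ring.
Qed.

Definition linop d m A S (f : (nat -> R) -> nat -> R) (vs : (nat -> R) -> nat -> R)
  (w : nat -> (nat -> R) -> R) c x :=
  rsum m (fun c' => A c c' * laplacian d (w c') x) + drift d S (w c) x
  + rsum m (fun c' => pd (fun y => f y c) c' (vs x) * w c' x).

Section Linearization.
Variables (d m : nat) (A S : nat -> nat -> R) (f : (nat -> R) -> nat -> R)
  (vs : (nat -> R) -> nat -> R).
Hypothesis Hf : CkV 1 m m f.
Hypothesis Hvs : CkV 3 d m vs.
Hypothesis Hpde : forall x c, (c < m)%nat ->
  rsum m (fun c' => A c c' * laplacian d (fun y => vs y c') x)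
  + drift d S (fun y => vs y c) x + f (vs x) c = 0.

Local Notation vsc c := (fun y : nat -> R => vs y c).
Local Notation Lv := (linop d m A S f vs).

(* Differentiate the equation in [x_j]. *)
Lemma linop_pd_solution x c j : (c < m)%nat -> (j < d)%nat ->
  Lv (fun c' => pd (vsc c') j) c x = - rsum d (fun i => S i j * pd (vsc c) i x).
Proof.
  intros Hc Hj.
  assert (H : partial_is (fun y => rsum m (fun c' => A c c' * laplacian d (vsc c') y)
                                   + drift d S (vsc c) y + f (vs y) c) j x
                (Lv (fun c' => pd (vsc c') j) c x + rsum d (fun i => S i j * pd (vsc c) i x))).
  { eapply partial_is_eq; [apply partial_plus; [apply partial_plus |] |].
    - apply partial_rsum. intros c' Hc'. apply partial_scal, partial_laplacian; auto.
    - apply partial_drift; [apply Ck_S, Hvs |]; auto.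
    - unfold partial_is.
      pose proof (chain_rule m (fun y => f y c) (fun t => vs (upd x j t)) (x j)
                    (fun c' => pd (vsc c') j x) (Hf c Hc)) as Hch.
      cbv beta in Hch. rewrite upd_same in Hch. apply Hch. intros c' Hc'.
      exact (Ck_partial 2 d (vsc c') j x (Hvs c' Hc') Hj).
    - unfold linop. ring. }
  apply partial_of_zero in H; [lra |]. intros y. apply Hpde; auto.
Qed.

Lemma linop_deriv_affine_expand M b x c :
  (forall i j, (i < d)%nat -> (j < d)%nat -> M j i = - M i j) -> (c < m)%nat ->
  Lv (fun c' => deriv_affine d (vsc c') M b) c x
  = rsum d (fun j => affine d M b x j * Lv (fun c' => pd (vsc c') j) c x)
    + rsum d (fun j => pd (vsc c) j x * rsum d (fun k => rsum d (fun a => M j a * S a k) * x k)).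
Proof.
  intros HM Hc. unfold linop.
  rewrite drift_deriv_affine by auto.
  rewrite (rsum_ext m (fun c' => A c c' * laplacian d _ x)
             (fun c' => rsum d (fun j => affine d M b x j * (A c c' * laplacian d (pd (vsc c') j) x))))
    by (intros; rewrite laplacian_deriv_affine, rsum_mult_l by auto; sum_congr; ring).
  rewrite rsum_swap.
  rewrite (rsum_ext m (fun c' => pd (fun y => f y c) c' (vs x) * _)
             (fun c' => rsum d (fun j => affine d M b x j * (pd (fun y => f y c) c' (vs x) * pd (vsc c') j x))))
    by (intros; unfold deriv_affine; rewrite rsum_mult_l; sum_congr; ring).
  rewrite (rsum_swap m d).
  rewrite <- !rsum_plus. sum_congr. rewrite <- !rsum_mult_l. ring.
Qed.

Lemma linop_deriv_affine M b x c :
  (forall i j, (i < d)%nat -> (j < d)%nat -> M j i = - M i j) -> (c < m)%nat ->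
  Lv (fun c' => deriv_affine d (vsc c') M b) c x
  = rsum d (fun i => pd (vsc c) i x *
      (rsum d (fun k => rsum d (fun a => M i a * S a k) * x k)
       - rsum d (fun j => S i j * affine d M b x j))).
Proof.
  intros HM Hc. rewrite linop_deriv_affine_expand by auto.
  rewrite (rsum_ext d (fun j => affine d M b x j * _)
             (fun j => rsum d (fun i => - (pd (vsc c) i x * (S i j * affine d M b x j)))))
    by (intros; rewrite linop_pd_solution, <- rsum_opp, rsum_mult_l by auto; sum_congr; ring).
  rewrite rsum_swap, <- rsum_plus. sum_congr.
  rewrite rsum_opp, <- rsum_mult_l. ring.
Qed.

Lemma deriv_affine_eigen r s P Q p q x c :
  (forall i j, (i < d)%nat -> (j < d)%nat -> P j i = - P i j) ->
  (forall a k, (a < d)%nat -> (k < d)%nat ->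
     r * P a k - s * Q a k
     = rsum d (fun e => P a e * S e k) - rsum d (fun e => S a e * P e k)) ->
  (forall a, (a < d)%nat -> r * p a - s * q a = - rsum d (fun e => S a e * p e)) ->
  (c < m)%nat ->
  r * deriv_affine d (vsc c) P p x - s * deriv_affine d (vsc c) Q q x
  - Lv (fun c' => deriv_affine d (vsc c') P p) c x = 0.
Proof.
  intros HP HPQ Hpq Hc. rewrite linop_deriv_affine by auto.
  unfold deriv_affine. rewrite !rsum_mult_l, <- !rsum_minus.
  apply rsum_zero. intros a Ha.
  rewrite <- (affine_commutator d S P Q p q r s HPQ Hpq x a Ha). ring.
Qed.
End Linearization.

(** * Eigenvectors of [S] *)

Module EigenvectorsOfS.
Import all_boot all_algebra Rstruct complex.
Import GRing.Theory.
Local Open Scope ring_scope.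

Definition toC (z : Cx) : R[i] := (Defs.Re z +i* Defs.Im z)%C.

Lemma toC_inj z w : toC z = toC w -> z = w.
Proof. by case: z => a b; case: w => c e; rewrite /toC => [[-> ->]]. Qed.

Lemma toC_sum n f : toC (Cxsum n f) = \sum_(k < n) toC (f k).
Proof. by elim: n => [|n IH]; rewrite ?big_ord0 // big_ord_recr /= -IH. Qed.

Section Matrices.
Variables (d : nat) (U : nat -> nat -> Cx) (S : nat -> nat -> R) (lam : nat -> Cx).
Hypotheses (HU : unitary d U) (HD : diagonalizes d U S lam).

Let Um : 'M[R[i]]_d := \matrix_(i < d, j < d) toC (U i j).
Let UH : 'M[R[i]]_d := \matrix_(i < d, j < d) conjc (toC (U j i)).
Let Sm : 'M[R[i]]_d := \matrix_(i < d, j < d) toC (RtoCx (S i j)).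
Let Lm : 'M[R[i]]_d := \matrix_(i < d, j < d) toC (if Nat.eqb i j then lam i else Cx0).

Let lt_ord (i : 'I_d) : Peano.lt i d := elimT ltP (ltn_ord i).

Let UH_U : UH *m Um = 1%:M.
Proof.
  apply/matrixP => i j; rewrite !mxE.
  have := congr1 toC (HU i j (lt_ord i) (lt_ord j)); rewrite toC_sum => E.
  rewrite (eq_bigr (fun k : 'I_d => toC (Cxmul (Cxconj (U k i)) (U k j)))) ?E;
    last by move=> k _; rewrite !mxE.
  by case: (Nat.eqb_spec i j) => [/val_inj -> | Hne]; rewrite ?eqxx //;
    case: eqP => // Hij; case: Hne; rewrite Hij.
Qed.

Let UH_S_U : UH *m Sm *m Um = Lm.
Proof.
  apply/matrixP => i j; rewrite !mxE.
  have := congr1 toC (HD i j (lt_ord i) (lt_ord j)); rewrite /UHSU toC_sum => <-.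
  under eq_bigr => l _ do rewrite !mxE big_distrl /=.
  rewrite exchange_big /=; apply: eq_bigr => k _.
  by rewrite toC_sum; apply: eq_bigr => l _; rewrite !mxE.
Qed.

(* A one-sided inverse of a square matrix is two-sided, so [U^H S U = Lambda] gives [S U = U Lambda]. *)
Let S_U : Sm *m Um = Um *m Lm.
Proof. by rewrite -UH_S_U !mulmxA (mulmx1C UH_U) mul1mx. Qed.

Let eigvec_ord (l p : 'I_d) :
  Cxsum d (fun k => Cxmul (RtoCx (S p k)) (U k l)) = Cxmul (U p l) (lam l).
Proof.
  apply: toC_inj; rewrite toC_sum.
  have := congr1 (fun M : 'M[R[i]]_d => M p l) S_U; rewrite !mxE /= => E.
  rewrite (eq_bigr (fun k : 'I_d => Sm p k * Um k l)); last by move=> k _; rewrite !mxE.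
  rewrite E (bigD1 l) //= big1 ?addr0; last first.
    move=> k Hk; rewrite !mxE; case: (Nat.eqb_spec k l) => [/val_inj H | _].
      by rewrite H eqxx in Hk.
    by rewrite mulr0.
  by rewrite !mxE Nat.eqb_refl.
Qed.

Lemma eigvec (l p : nat) : Peano.lt l d -> Peano.lt p d ->
  Cxsum d (fun k => Cxmul (RtoCx (S p k)) (U k l)) = Cxmul (U p l) (lam l).
Proof. by move=> /ltP Hl /ltP Hp; exact: (eigvec_ord (Ordinal Hl) (Ordinal Hp)). Qed.
End Matrices.
End EigenvectorsOfS.

Lemma eigvec_left d U S lam : skew d S -> unitary d U -> diagonalizes d U S lam ->
  forall l k, (l < d)%nat -> (k < d)%nat ->
  Cxsum d (fun a => Cxmul (U a l) (RtoCx (S a k))) = Cxopp (Cxmul (U k l) (lam l)).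
Proof.
  intros HS HU HD l k Hl Hk.
  rewrite <- (EigenvectorsOfS.eigvec d U S lam HU HD l k Hl Hk), <- Cxsum_opp.
  apply Cxsum_ext. intros a Ha. apply Cx_eq; simpl; rewrite (HS k a) by auto; ring.
Qed.

Lemma Re_eigenvalue_skew d U S lam : skew d S -> diagonalizes d U S lam ->
  forall l, (l < d)%nat -> Re (lam l) = 0.
Proof.
  intros HS HD l Hl. pose proof (HD l l Hl Hl) as E. rewrite Nat.eqb_refl in E.
  rewrite <- E. unfold UHSU. rewrite Re_Cxsum.
  rewrite (rsum_ext d _ (fun k => rsum d (fun l' =>
             Re (Cxmul (Cxmul (Cxconj (U k l)) (RtoCx (S k l'))) (U l' l)))))
    by (intros; apply Re_Cxsum).
  apply rsum_skew. intros i j Hi Hj. simpl. rewrite (HS i j) by auto. ring.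
Qed.

Lemma E_ii_commutator d U S lam i j p k :
  skew d S -> unitary d U -> diagonalizes d U S lam ->
  (i < d)%nat -> (j < d)%nat -> (p < d)%nat -> (k < d)%nat ->
  Cxmul (Cxopp (Cxadd (lam i) (lam j))) (E_ii U i j p k)
  = Cxsub (Cxsum d (fun a => Cxmul (E_ii U i j p a) (RtoCx (S a k))))
          (Cxsum d (fun a => Cxmul (RtoCx (S p a)) (E_ii U i j a k))).
Proof.
  intros HS HU HD Hi Hj Hp Hk. unfold E_ii.
  rewrite (Cxsum_ext d (fun a => Cxmul (Cxsub _ _) _)
             (fun a => Cxsub (Cxmul (U p i) (Cxmul (U a j) (RtoCx (S a k))))
                             (Cxmul (U p j) (Cxmul (U a i) (RtoCx (S a k))))))
    by (intros; ring).
  rewrite (Cxsum_ext d (fun a => Cxmul (RtoCx (S p a)) _)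
             (fun a => Cxsub (Cxmul (Cxmul (RtoCx (S p a)) (U a i)) (U k j))
                             (Cxmul (Cxmul (RtoCx (S p a)) (U a j)) (U k i))))
    by (intros; ring).
  rewrite !Cxsum_minus, <- !Cxsum_mult_l, <- !Cxsum_mult_r.
  rewrite !(eigvec_left d U S lam), !(EigenvectorsOfS.eigvec d U S lam) by auto.
  ring.
Qed.

Definition linopC d m A S (f : (nat -> R) -> nat -> R) (vs : (nat -> R) -> nat -> R)
  (v : (nat -> R) -> nat -> Cx) c x : Cx :=
  Cxadd (Cxadd
    (Cxsum m (fun c' => Cxmul (RtoCx (A c c'))
       (Cxsum d (fun i => pdC (fun y => pdC (fun z => v z c') i y) i x))))
    (Cxsum d (fun i => Cxsum d (fun j =>
       Cxmul (RtoCx (S i j * x j)) (pdC (fun y => v y c) i x)))))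
    (Cxsum m (fun c' => Cxmul (RtoCx (pd (fun y => f y c) c' (vs x))) (v x c'))).

Lemma Re_linopC d m A S f vs v c x :
  Re (linopC d m A S f vs v c x) = linop d m A S f vs (fun c' y => Re (v y c')) c x.
Proof.
  unfold linopC, linop, laplacian, drift. cbn [Re Im Cxadd Cxmul RtoCx].
  rewrite !Re_Cxsum. f_equal; [f_equal |]; sum_congr;
    cbn [Re Im Cxmul RtoCx]; rewrite ?Rmult_0_l, ?Rminus_0_r, ?Re_Cxsum;
    try (sum_congr; cbn [Re Im Cxmul RtoCx]; rewrite Rmult_0_l, Rminus_0_r);
    reflexivity.
Qed.

Lemma Im_linopC d m A S f vs v c x :
  Im (linopC d m A S f vs v c x) = linop d m A S f vs (fun c' y => Im (v y c')) c x.
Proof.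
  unfold linopC, linop, laplacian, drift. cbn [Re Im Cxadd Cxmul RtoCx].
  rewrite !Im_Cxsum. f_equal; [f_equal |]; sum_congr;
    cbn [Re Im Cxmul RtoCx]; rewrite ?Rmult_0_l, ?Rplus_0_r, ?Im_Cxsum;
    try (sum_congr; cbn [Re Im Cxmul RtoCx]; rewrite Rmult_0_l, Rplus_0_r);
    reflexivity.
Qed.

Section Eigenfunction.
Variables (d m : nat) (A S : nat -> nat -> R) (f : (nat -> R) -> nat -> R)
  (vs : (nat -> R) -> nat -> R) (E : nat -> nat -> Cx) (b : nat -> Cx) (lm : Cx).
Hypothesis Hf : CkV 1 m m f.
Hypothesis Hvs : CkV 3 d m vs.
Hypothesis Hsol : solves_nonlinear d m A S f vs.
Hypothesis HE : forall p k, (p < d)%nat -> (k < d)%nat -> E k p = Cxopp (E p k).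
Hypothesis HES : forall p k, (p < d)%nat -> (k < d)%nat ->
  Cxmul lm (E p k) = Cxsub (Cxsum d (fun a => Cxmul (E p a) (RtoCx (S a k))))
                           (Cxsum d (fun a => Cxmul (RtoCx (S p a)) (E a k))).
Hypothesis HbS : forall p, (p < d)%nat ->
  Cxmul lm (b p) = Cxopp (Cxsum d (fun a => Cxmul (RtoCx (S p a)) (b a))).

Let ReE a k := Re (E a k).
Let ImE a k := Im (E a k).
Let Reb a := Re (b a).
Let Imb a := Im (b a).
Let v := vfun d vs E b.

Let Re_v c : (fun y => Re (v y c)) = deriv_affine d (fun y => vs y c) ReE Reb.
Proof.
  apply functional_extensionality; intro y.
  unfold v, vfun, deriv_affine, affine.
  rewrite Re_Cxsum. apply rsum_ext; intros j Hj. cbn [Re Im Cxmul Cxadd RtoCx]. rewrite Re_Cxsum.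
  rewrite (rsum_ext d (fun k => Re (Cxmul _ _)) (fun k => ReE j k * y k))
    by (intros; unfold ReE; cbn [Re Im Cxmul RtoCx]; ring).
  unfold Reb. ring.
Qed.

Let Im_v c : (fun y => Im (v y c)) = deriv_affine d (fun y => vs y c) ImE Imb.
Proof.
  apply functional_extensionality; intro y.
  unfold v, vfun, deriv_affine, affine.
  rewrite Im_Cxsum. apply rsum_ext; intros j Hj. cbn [Re Im Cxmul Cxadd RtoCx]. rewrite Im_Cxsum.
  rewrite (rsum_ext d (fun k => Im (Cxmul _ _)) (fun k => ImE j k * y k))
    by (intros; unfold ImE; cbn [Re Im Cxmul RtoCx]; ring).
  unfold Imb. ring.
Qed.

Let ReE_skew i j : (i < d)%nat -> (j < d)%nat -> ReE j i = - ReE i j.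
Proof. intros. unfold ReE. rewrite HE by auto. reflexivity. Qed.

Let ImE_skew i j : (i < d)%nat -> (j < d)%nat -> ImE j i = - ImE i j.
Proof. intros. unfold ImE. rewrite HE by auto. reflexivity. Qed.

Let ReE_commutator a k : (a < d)%nat -> (k < d)%nat ->
  Re lm * ReE a k - Im lm * ImE a k
  = rsum d (fun e => ReE a e * S e k) - rsum d (fun e => S a e * ReE e k).
Proof.
  intros Ha Hk. transitivity (Re (Cxmul lm (E a k))); [reflexivity |].
  rewrite HES by auto. cbn [Re Im Cxsub Cxadd Cxopp]. rewrite !Re_Cxsum.
  unfold Rminus. f_equal; [| f_equal]; sum_congr; unfold ReE; cbn [Re Im Cxmul RtoCx]; ring.
Qed.

Let ImE_commutator a k : (a < d)%nat -> (k < d)%nat ->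
  Re lm * ImE a k - - Im lm * ReE a k
  = rsum d (fun e => ImE a e * S e k) - rsum d (fun e => S a e * ImE e k).
Proof.
  intros Ha Hk. transitivity (Im (Cxmul lm (E a k))); [cbn [Re Im Cxmul]; unfold ImE, ReE; ring |].
  rewrite HES by auto. cbn [Re Im Cxsub Cxadd Cxopp]. rewrite !Im_Cxsum.
  unfold Rminus. f_equal; [| f_equal]; sum_congr; unfold ImE; cbn [Re Im Cxmul RtoCx]; ring.
Qed.

Let Reb_eigen a : (a < d)%nat ->
  Re lm * Reb a - Im lm * Imb a = - rsum d (fun e => S a e * Reb e).
Proof.
  intros Ha. transitivity (Re (Cxmul lm (b a))); [reflexivity |].
  rewrite HbS by auto. cbn [Re Im Cxopp]. rewrite Re_Cxsum.
  f_equal. sum_congr. unfold Reb. cbn [Re Im Cxmul RtoCx]. ring.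
Qed.

Let Imb_eigen a : (a < d)%nat ->
  Re lm * Imb a - - Im lm * Reb a = - rsum d (fun e => S a e * Imb e).
Proof.
  intros Ha. transitivity (Im (Cxmul lm (b a))); [cbn [Re Im Cxmul]; unfold Imb, Reb; ring |].
  rewrite HbS by auto. cbn [Re Im Cxopp]. rewrite Im_Cxsum.
  f_equal. sum_congr. unfold Imb. cbn [Re Im Cxmul RtoCx]. ring.
Qed.

Theorem vfun_solves_eig : solves_eig d m A S f vs lm v.
Proof.
  destruct Hsol as [_ Hpde].
  split.
  - intros c Hc. rewrite Re_v, Im_v. split; apply Ck_deriv_affine, Hvs; auto.
  - intros x c Hc.
    change (Cxsub (Cxmul lm (v x c)) (linopC d m A S f vs v c x) = Cx0).
    assert (HRe : Re (v x c) = deriv_affine d (fun y => vs y c) ReE Reb x)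
      by (rewrite <- Re_v; reflexivity).
    assert (HIm : Im (v x c) = deriv_affine d (fun y => vs y c) ImE Imb x)
      by (rewrite <- Im_v; reflexivity).
    apply Cx_eq; cbn [Re Im Cxsub Cxadd Cxopp Cxmul Cx0 RtoCx].
    + rewrite Re_linopC, HRe, HIm.
      replace (fun c' y => Re (v y c')) with (fun c' => deriv_affine d (fun y => vs y c') ReE Reb)
        by (apply functional_extensionality; intro; symmetry; apply Re_v).
      pose proof (deriv_affine_eigen d m A S f vs Hf Hvs Hpde (Re lm) (Im lm) ReE ImE Reb Imb
                    x c ReE_skew ReE_commutator Reb_eigen Hc).
      lra.
    + rewrite Im_linopC, HRe, HIm.
      replace (fun c' y => Im (v y c')) with (fun c' => deriv_affine d (fun y => vs y c') ImE Imb)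
        by (apply functional_extensionality; intro; symmetry; apply Im_v).
      pose proof (deriv_affine_eigen d m A S f vs Hf Hvs Hpde (Re lm) (- Im lm) ImE ReE Imb Reb
                    x c ImE_skew ImE_commutator Imb_eigen Hc).
      lra.
Qed.
End Eigenfunction.

Theorem theorem2p3 (d m : nat) (A : nat -> nat -> R)
  (f : (nat -> R) -> (nat -> R)) (S : nat -> nat -> R)
  (U : nat -> nat -> Cx) (lam : nat -> Cx) (vs : (nat -> R) -> (nat -> R)) :
  (2 <= d)%nat ->
  CkV 1 m m f ->
  skew d S ->
  unitary d U ->
  diagonalizes d U S lam ->
  CkV 3 d m vs ->
  solves_nonlinear d m A S f vs ->
  (forall l, (l < d)%nat ->
     solves_eig d m A S f vs (Cxopp (lam l)) (vfun d vs E0 (b_i U l))) /\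
  (forall i j, (i < j)%nat -> (j < d)%nat ->
     solves_eig d m A S f vs (Cxopp (Cxadd (lam i) (lam j)))
       (vfun d vs (E_ii U i j) b0)) /\
  (forall l, (l < d)%nat -> Re (Cxopp (lam l)) = 0) /\
  (forall i j, (i < j)%nat -> (j < d)%nat ->
     Re (Cxopp (Cxadd (lam i) (lam j))) = 0).
Proof.
  intros _ Hf HS HU HD Hvs Hsol.
  pose proof (Re_eigenvalue_skew d U S lam HS HD) as Hre.
  split; [| split; [| split]].
  - intros l Hl. apply vfun_solves_eig; auto.
    + intros p k _ _. apply Cx_eq; simpl; ring.
    + intros p k _ _. unfold E0. rewrite !Cxsum_zero; [ring | |]; intros; ring.
    + intros p Hp. unfold b_i. rewrite (EigenvectorsOfS.eigvec d U S lam) by auto. ring.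
  - intros i j Hij Hj. apply vfun_solves_eig; auto.
    + intros p k _ _. unfold E_ii. ring.
    + intros p k Hp Hk. apply (E_ii_commutator d); auto; lia.
    + intros p Hp. unfold b0. rewrite Cxsum_zero; [ring |]. intros; ring.
  - intros l Hl. simpl. rewrite Hre by auto. ring.
  - intros i j Hij Hj. simpl. rewrite !Hre by lia. ring.
Qed.
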